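(* Let $A_1,B_3,A_2,B_1,A_3,B_2$ be six points lying on a (nondegenerate) conic, taken as the vertices, in this order, of the inscribed hexagon $A_1B_3A_2B_1A_3B_2$, in general position so that the points below are well defined. For every permutation $(i,j,k)$ of $(1,2,3)$ let $Q_{ij}$ be the intersection point of the lines $A_iB_k$ and $B_jA_k$. Then the three lines $Q_{12}Q_{21}$, $Q_{13}Q_{31}$ and $Q_{23}Q_{32}$ pass through a common point.
   Context: Points and lines are in the real projective plane. *)

(* Real projective plane P^2(R) via homogeneous coordinates:
   a point is a nonzero row vector in R^3, two such vectors represent the same
   point iff they are proportional. *)
From HB Require Import structures.
From mathcomp Require Import all_boot all_order all_algebra.
From mathcomp Require Import reals.
Set Implicit Arguments. Unset Strict Implicit. Unset Printing Implicit Defensive.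
Import Order.TTheory GRing.Theory Num.Theory.
Local Open Scope ring_scope.

Section Proj.
Variable R : realType.

Definition ppoint (p : 'rV[R]_3) : Prop := p != 0.

Definition proj_eq (p q : 'rV[R]_3) : Prop := exists c : R, c != 0 /\ q = c *: p.

Definition rows3 (p q r : 'rV[R]_3) : 'M[R]_3 :=
  \matrix_(i < 3, j < 3)
    (if i == 0 :> nat then p 0 j else if i == 1 :> nat then q 0 j else r 0 j).

Definition collinear (p q r : 'rV[R]_3) : Prop := \det (rows3 p q r) = 0.

Definition nondeg_conic (M : 'M[R]_3) : Prop := M^T = M /\ \det M != 0.

Definition on_conic (M : 'M[R]_3) (p : 'rV[R]_3) : Prop :=
  (p *m M *m p^T) 0 0 = 0.

End Proj.

From HB Require Import structures.
From mathcomp Require Import all_boot all_order all_algebra.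
From mathcomp Require Import reals.
From mathcomp Require Import ring.
Import Order.TTheory GRing.Theory Num.Theory.
Local Open Scope ring_scope.

Set Implicit Arguments. Unset Strict Implicit. Unset Printing Implicit Defensive.

(* Three distinct points of a nondegenerate conic are never collinear, so
   A_1, A_2, A_3 form a projective frame.  In it the conic becomes
   a yz + b zx + c xy = 0, and every point of it off the vertices is
   proportional to (a v (u + v), b u (u + v), - c u v) for some nonzero u, v,
   u + v.  Each Q_ij is then the meet of two explicit lines, and the
   determinant of the coordinate vectors of the three lines Q_ij Q_ji is a
   polynomial in the parameters which vanishes identically; a vanishing
   determinant of three lines is exactly their concurrency. *)

Lemma ord3P (i : 'I_3) : [\/ i = 0, i = 1 | i = 2].
Proof.
by case: i => [[|[|[|//]]] ?]; [constructor 1|constructor 2|constructor 3]; apply: val_inj.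
Qed.

Section Vec3.
Variable R : fieldType.
Implicit Types (p q r : 'rV[R]_3) (k x y z : R).

Definition vec3 x y z : 'rV[R]_3 := \row_j [:: x; y; z]`_j.

Variant vec3_spec p : Prop := Vec3Spec x y z of p = vec3 x y z.

Lemma vec3P p : vec3_spec p.
Proof.
apply: (Vec3Spec (x := p 0 0) (y := p 0 1) (z := p 0 2)).
by apply/rowP => -[[|[|[|//]]] ?]; rewrite !mxE //=; congr (p 0 _); apply: val_inj.
Qed.

Lemma delta3E (i : 'I_3) : 'e_i = vec3 (i == 0)%:R (i == 1)%:R (i == 2)%:R.
Proof. by case: (ord3P i) => ->; apply/rowP => -[[|[|[|//]]] ?]; rewrite !mxE. Qed.

Lemma vec3_eq0 x y z : (vec3 x y z == 0) = [&& x == 0, y == 0 & z == 0].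
Proof.
apply/eqP/and3P => [/rowP e | [/eqP-> /eqP-> /eqP->]].
  by move: (e 0) (e 1) (e 2); rewrite !mxE /= => -> -> ->.
by apply/rowP => -[[|[|[|//]]] ?]; rewrite !mxE.
Qed.

Lemma scale_vec3 k x y z : k *: vec3 x y z = vec3 (k * x) (k * y) (k * z).
Proof. by apply/rowP => -[[|[|[|//]]] ?]; rewrite !mxE. Qed.

Lemma add_vec3 x y z x' y' z' :
  vec3 x y z + vec3 x' y' z' = vec3 (x + x') (y + y') (z + z').
Proof. by apply/rowP => -[[|[|[|//]]] ?]; rewrite !mxE. Qed.

Definition dot p q : R := (p *m q^T) 0 0.

Definition cross p q : 'rV[R]_3 :=
  vec3 (p 0 1 * q 0 2 - p 0 2 * q 0 1) (p 0 2 * q 0 0 - p 0 0 * q 0 2)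
       (p 0 0 * q 0 1 - p 0 1 * q 0 0).

Lemma dot_vec3 x y z x' y' z' :
  dot (vec3 x y z) (vec3 x' y' z') = x * x' + y * y' + z * z'.
Proof. by rewrite /dot !mxE !big_ord_recr big_ord0 /= !mxE /= add0r. Qed.

Lemma cross_vec3 x y z x' y' z' :
  cross (vec3 x y z) (vec3 x' y' z') =
  vec3 (y * z' - z * y') (z * x' - x * z') (x * y' - y * x').
Proof. by rewrite /cross !mxE. Qed.

Lemma dotC p q : dot p q = dot q p.
Proof. by case: (vec3P p) (vec3P q) => x y z -> [x' y' z' ->]; rewrite !dot_vec3; ring. Qed.

Lemma dotDl p q r : dot (p + q) r = dot p r + dot q r.
Proof. by rewrite /dot mulmxDl mxE. Qed.

Lemma dotZl k p q : dot (k *: p) q = k * dot p q.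
Proof. by rewrite /dot -scalemxAl mxE. Qed.

Lemma dotNr p q : dot p (- q) = - dot p q.
Proof. by rewrite /dot linearN mulmxN mxE. Qed.

Lemma dot_delta p (i : 'I_3) : dot 'e_i p = p 0 i.
Proof. by rewrite /dot -rowE !mxE. Qed.

Lemma crossC p q : cross p q = - cross q p.
Proof.
case: (vec3P p) (vec3P q) => x y z -> [x' y' z' ->].
by rewrite !cross_vec3 -scaleN1r scale_vec3; congr vec3; ring.
Qed.

Lemma crossvv p : cross p p = 0.
Proof.
case: (vec3P p) => x y z ->; rewrite cross_vec3.
by apply/eqP; rewrite vec3_eq0; apply/and3P; split; apply/eqP; ring.
Qed.

Lemma cross0v q : cross 0 q = 0.
Proof. by apply/eqP; rewrite /cross vec3_eq0 !mxE !mul0r subrr eqxx. Qed.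

Lemma crossZr k p q : cross p (k *: q) = k *: cross p q.
Proof.
case: (vec3P p) (vec3P q) => x y z -> [x' y' z' ->].
by rewrite scale_vec3 !cross_vec3 scale_vec3; congr vec3; ring.
Qed.

Lemma cross_cross p q r : cross p (cross q r) = dot p r *: q - dot p q *: r.
Proof.
case: (vec3P p) (vec3P q) (vec3P r) => x y z -> [x' y' z' ->] [x'' y'' z'' ->].
rewrite !cross_vec3 !dot_vec3 !scale_vec3 -scaleN1r scale_vec3 add_vec3.
by congr vec3; ring.
Qed.

Lemma cross_eq0_proportional p q : p != 0 -> cross p q = 0 -> exists k, q = k *: p.
Proof.
move=> p0 pq0.
(* Contracting with a basis vector e_i such that p_i != 0 gives q_i p = p_i q. *)
have [i pi0] : exists i, p 0 i != 0.
  apply/existsP; rewrite -negb_forall; apply: contra p0 => /forallP pi0.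
  by apply/eqP/rowP => i; rewrite mxE; apply/eqP: (pi0 i).
have := cross_cross 'e_i p q; rewrite pq0 crossC cross0v oppr0 !dot_delta => /eqP.
rewrite eq_sym subr_eq0 => /eqP qp; exists (q 0 i / p 0 i).
by rewrite mulrC -scalerA qp scalerA mulVf // scale1r.
Qed.

Lemma orthogonal2_cross r p q : dot r p = 0 -> dot r q = 0 -> cross p q != 0 ->
  exists k, r = k *: cross p q.
Proof.
move=> rp rq pq0; apply: cross_eq0_proportional => //.
by rewrite crossC cross_cross rp rq !scale0r subrr oppr0.
Qed.

End Vec3.

Section Projective.
Variable R : realType.
Implicit Types (M T : 'M[R]_3) (p q r : 'rV[R]_3) (k x y z : R).

Lemma det_rows3 p q r : \det (rows3 p q r) = dot r (cross p q).
Proof.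
case: (vec3P p) (vec3P q) (vec3P r) => x y z -> [x' y' z' ->] [x'' y'' z'' ->].
rewrite (expand_det_row _ 0) !big_ord_recr big_ord0 /= /cofactor.
rewrite !(expand_det_row _ 0) !big_ord_recr !big_ord0 /= /cofactor !det_mx11 !mxE /=.
by rewrite cross_vec3 dot_vec3; ring.
Qed.

Lemma row_rows3 p0 p1 p2 (i : 'I_3) : row i (rows3 p0 p1 p2) = [:: p0; p1; p2]`_i.
Proof. by apply/rowP => j; case: (ord3P i) => ->; rewrite !mxE. Qed.

Lemma rows3_mulmx p q r T : rows3 (p *m T) (q *m T) (r *m T) = rows3 p q r *m T.
Proof.
apply/matrixP => i j; rewrite !mxE; under [RHS]eq_bigr do rewrite mxE.
by case: ifP => _; last case: ifP.
Qed.

Lemma mul_vec3_rows3 x y z p q r :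
  vec3 x y z *m rows3 p q r = x *: p + y *: q + z *: r.
Proof. by apply/rowP => j; rewrite !mxE !big_ord_recr big_ord0 /= !mxE /= add0r. Qed.

Lemma collinear_mulmx T p q r :
  T \in unitmx -> collinear (p *m T) (q *m T) (r *m T) <-> collinear p q r.
Proof.
rewrite unitmxE unitfE /collinear rows3_mulmx det_mulmx => T0.
by split => [/eqP|->]; rewrite ?mul0r // mulf_eq0 (negbTE T0) orbF => /eqP.
Qed.

Lemma collinear_scale k1 k2 k3 p q r :
  collinear p q r -> collinear (k1 *: p) (k2 *: q) (k3 *: r).
Proof.
case: (vec3P p) (vec3P q) (vec3P r) => x y z -> [x' y' z' ->] [x'' y'' z'' ->].
rewrite /collinear !det_rows3 !scale_vec3 !cross_vec3 !dot_vec3 => e.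
by rewrite -[RHS](mulr0 (k1 * k2 * k3)) -e; ring.
Qed.

Lemma cross_neq0 p q : ppoint p -> ppoint q -> ~ proj_eq p q -> cross p q != 0.
Proof.
move=> p0 q0 npq; apply/eqP => /(cross_eq0_proportional p0) [k qk].
by apply: npq; exists k; split => //; apply: contraNneq q0 => k0; rewrite qk k0 scale0r.
Qed.

Lemma concurrent_of_det (Q : 'I_3 -> 'I_3 -> 'rV[R]_3) :
  \det (rows3 (cross (Q 0 1) (Q 1 0)) (cross (Q 0 2) (Q 2 0)) (cross (Q 1 2) (Q 2 1))) = 0 ->
  exists2 P, P != 0 & forall i j, i != j -> collinear (Q i j) (Q j i) P.
Proof.
set L := rows3 _ _ _ => /eqP; rewrite -det_tr => /det0P [P P0 PL]; exists P => // i j.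
have onL m : dot P (row m L) = 0.
  transitivity ((P *m L^T) 0 m); last by rewrite PL mxE.
  by rewrite /dot !mxE; apply: eq_bigr => n _; rewrite !mxE.
have := onL 0; have := onL 1; have := onL 2; rewrite !row_rows3 /= => l12 l02 l01.
rewrite /collinear det_rows3.
by case: (ord3P i) => ->; case: (ord3P j) => -> //= _;
  rewrite crossC dotNr ?l01 ?l02 ?l12 oppr0.
Qed.

Definition form M p q : R := dot (p *m M) q.

Lemma on_conicE M p : on_conic M p <-> form M p p = 0.
Proof. by []. Qed.

Lemma formDl M p q r : form M (p + q) r = form M p r + form M q r.
Proof. by rewrite /form mulmxDl dotDl. Qed.

Lemma formZl M k p q : form M (k *: p) q = k * form M p q.
Proof. by rewrite /form -scalemxAl dotZl. Qed.

Lemma formDr M p q r : form M p (q + r) = form M p q + form M p r.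
Proof. by rewrite /form dotC dotDl !(dotC _ (p *m M)). Qed.

Lemma formZr M k p q : form M p (k *: q) = k * form M p q.
Proof. by rewrite /form dotC dotZl dotC. Qed.

Lemma formC M p q : M^T = M -> form M p q = form M q p.
Proof.
move=> MT; rewrite /form /dot.
have -> : p *m M *m q^T = (q *m M *m p^T)^T by rewrite !trmx_mul trmxK MT mulmxA.
by rewrite mxE.
Qed.

Lemma conic_form_neq0 M p q : nondeg_conic M -> on_conic M p -> on_conic M q ->
  cross p q != 0 -> form M p q != 0.
Proof.
(* Otherwise pM and qM would both be normal to the line pq, so a nontrivial
   combination of p and q would lie in the kernel of M. *)
move=> [MT M0] pp qq pq0; apply/eqP => pq.
have Mu : M \in unitmx by rewrite unitmxE unitfE.
have Minj : injective (fun x : 'rV[R]_3 => x *m M) := can_inj (mulmxK Mu).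
have [l pM] := orthogonal2_cross (r := p *m M) pp pq pq0.
have [m qM] : exists m, q *m M = m *: cross p q.
  by apply: orthogonal2_cross => //; rewrite -/(form M q p) formC.
have /Minj/eqP : (m *: p - l *: q) *m M = 0 *m M.
  by rewrite mul0mx mulmxBl -!scalemxAl pM qM !scalerA mulrC subrr.
rewrite subr_eq0 => /eqP /(congr1 (cross p)).
rewrite !crossZr crossvv scaler0 => /esym/eqP; rewrite scaler_eq0 (negbTE pq0) orbF.
move=> /eqP l0; move: pq0; rewrite (_ : p = 0) ?cross0v ?eqxx //.
by apply: Minj; rewrite /= pM l0 scale0r !mul0mx.
Qed.

Lemma conic_rows3_unit M p0 p1 p2 : M^T = M ->
  on_conic M p0 -> on_conic M p1 -> on_conic M p2 ->
  form M p1 p2 != 0 -> form M p0 p2 != 0 -> form M p0 p1 != 0 ->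
  rows3 p0 p1 p2 \in unitmx.
Proof.
move=> MT /on_conicE o0 /on_conicE o1 /on_conicE o2 a0 b0 c0.
rewrite unitmxE unitfE; apply/det0P => -[w]; case: (vec3P w) => x y z -> /negP w0.
rewrite mul_vec3_rows3 => comb0; apply: w0; rewrite vec3_eq0.
have f s : form M (x *: p0 + y *: p1 + z *: p2) s = 0.
  by rewrite comb0 /form mul0mx /dot mul0mx mxE.
move: (f p0) (f p1) (f p2); rewrite !formDl !formZl o0 o1 o2.
rewrite (formC p1 p0) // (formC p2 p0) // (formC p2 p1) // !mulr0 !addr0 !add0r.
set a := form M p1 p2; set b := form M p0 p2; set c := form M p0 p1 => e0 e1 e2.
(* This linear system in x, y, z has determinant 2abc. *)
have two0 : (2 : R) != 0 by rewrite pnatr_eq0.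
have : 2 * b * c * x = b * (x * c + z * a) + c * (x * b + y * a) - a * (y * c + z * b).
  by ring.
have : 2 * a * c * y = a * (y * c + z * b) + c * (x * b + y * a) - b * (x * c + z * a).
  by ring.
have : 2 * a * b * z = a * (y * c + z * b) + b * (x * c + z * a) - c * (x * b + y * a).
  by ring.
rewrite e0 e1 e2 !(mulr0, addr0, subr0) => /eqP + /eqP + /eqP.
by rewrite !mulf_eq0 (negbTE two0) (negbTE a0) (negbTE b0) (negbTE c0) /= => -> -> ->.
Qed.

Lemma on_conic_comb3 M p0 p1 p2 x y z : M^T = M ->
  on_conic M p0 -> on_conic M p1 -> on_conic M p2 ->
  form M (x *: p0 + y *: p1 + z *: p2) (x *: p0 + y *: p1 + z *: p2) =
  2 * (form M p1 p2 * y * z + form M p0 p2 * x * z + form M p0 p1 * x * y).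
Proof.
move=> MT /on_conicE o0 /on_conicE o1 /on_conicE o2.
rewrite !formDl !formDr !formZl !formZr o0 o1 o2.
by rewrite (formC p1 p0) // (formC p2 p0) // (formC p2 p1) //; ring.
Qed.

Section Frame.
Variable A : 'I_3 -> 'rV[R]_3.
Local Notation T := (rows3 (A 0) (A 1) (A 2)).

Definition frame_coords p := p *m invmx T.

Hypothesis T_unit : T \in unitmx.

Lemma frame_coordsK p : frame_coords p *m T = p.
Proof. exact: mulmxKV. Qed.

Lemma frame_coordsKV p : frame_coords (p *m T) = p.
Proof. exact: mulmxK. Qed.

Lemma frame_coords_vertex i : frame_coords (A i) = 'e_i.
Proof.
rewrite -[A i](_ : 'e_i *m T = A i) ?frame_coordsKV //.
by rewrite -rowE row_rows3; case: (ord3P i) => ->.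
Qed.

Lemma collinear_frame_coords p q r :
  collinear (frame_coords p) (frame_coords q) (frame_coords r) <-> collinear p q r.
Proof. by apply: collinear_mulmx; rewrite unitmx_inv. Qed.

Variable M : 'M[R]_3.
Hypothesis M_sym : M^T = M.
Hypothesis A_conic : forall i, on_conic M (A i).
Hypothesis A_form : forall i j, i != j -> form M (A i) (A j) != 0.

Lemma frame_coords_conic p x y z : on_conic M p -> (forall i, cross (A i) p != 0) ->
  frame_coords p = vec3 x y z ->
  [/\ x != 0, y != 0, z != 0 &
      form M (A 1) (A 2) * y * z + form M (A 0) (A 2) * x * z +
      form M (A 0) (A 1) * x * y = 0].
Proof.
move=> /on_conicE pp Ap px.
have {px} pE : p = x *: A 0 + y *: A 1 + z *: A 2.
  by rewrite -(frame_coordsK p) px mul_vec3_rows3.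
have e : form M (A 1) (A 2) * y * z + form M (A 0) (A 2) * x * z +
         form M (A 0) (A 1) * x * y = 0.
  by move: pp; rewrite pE on_conic_comb3 // => /eqP; rewrite mulf_eq0 pnatr_eq0 => /eqP.
have xy : x = 0 -> y = 0 -> False.
  move=> x0 y0; move: (Ap 2); rewrite pE x0 y0 !scale0r !add0r.
  by rewrite crossZr crossvv scaler0 eqxx.
have xz : x = 0 -> z = 0 -> False.
  move=> x0 z0; move: (Ap 1); rewrite pE x0 z0 !scale0r add0r addr0.
  by rewrite crossZr crossvv scaler0 eqxx.
have yz : y = 0 -> z = 0 -> False.
  move=> y0 z0; move: (Ap 0); rewrite pE y0 z0 !scale0r !addr0.
  by rewrite crossZr crossvv scaler0 eqxx.
have a0 : form M (A 1) (A 2) != 0 by apply: A_form.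
have b0 : form M (A 0) (A 2) != 0 by apply: A_form.
have c0 : form M (A 0) (A 1) != 0 by apply: A_form.
split => //; apply/eqP => w0; move: e; rewrite w0 !(mulr0, mul0r, addr0, add0r) => /eqP.
all: rewrite !mulf_eq0 ?(negbTE a0, negbTE b0, negbTE c0) /=.
all: move=> /orP [] /eqP t0; by [apply: xy | apply: xz | apply: yz].
Qed.

End Frame.

Definition conic_point (a b c u v : R) : 'rV[R]_3 :=
  vec3 (a * v * (u + v)) (b * u * (u + v)) (- (c * u * v)).

Lemma conic_points_lines_meet (a b c : R) (u v : 'I_3 -> R) (i j k : 'I_3) :
  a != 0 -> b != 0 -> c != 0 ->
  (forall j, [/\ u j != 0, v j != 0 & u j + v j != 0]) ->
  i != j -> j != k -> i != k ->
  cross (cross 'e_i (conic_point a b c (u k) (v k)))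
        (cross (conic_point a b c (u j) (v j)) 'e_k) != 0.
Proof.
move=> a0 b0 c0 uv0.
have [u0 v0 w0] := uv0 0; have [u1 v1 w1] := uv0 1; have [u2 v2 w2] := uv0 2.
rewrite /conic_point.
(* In each case one coordinate of the intersection point is a product of
   nonzero factors. *)
case: (ord3P i) => ->; case: (ord3P j) => ->; case: (ord3P k) => -> //= _ _ _;
  rewrite !delta3E /= !cross_vec3 vec3_eq0;
  rewrite !(mul0r, mulr0, mul1r, mulr1, subr0, sub0r, add0r, addr0, mulrN, mulNr, opprK);
  by rewrite ?oppr_eq0 !mulf_eq0 ?(negbTE a0, negbTE b0, negbTE c0, negbTE u0, negbTE u1,
    negbTE u2, negbTE v0, negbTE v1, negbTE v2, negbTE w0, negbTE w1, negbTE w2) ?andbF.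
Qed.

Lemma hexagon_conic_points (a b c : R) (u v : 'I_3 -> R) (Q : 'I_3 -> 'I_3 -> 'rV[R]_3) :
  a != 0 -> b != 0 -> c != 0 ->
  (forall j, [/\ u j != 0, v j != 0 & u j + v j != 0]) ->
  (forall i j k : 'I_3, i != j -> j != k -> i != k ->
     collinear 'e_i (conic_point a b c (u k) (v k)) (Q i j) /\
     collinear (conic_point a b c (u j) (v j)) 'e_k (Q i j)) ->
  \det (rows3 (cross (Q 0 1) (Q 1 0)) (cross (Q 0 2) (Q 2 0)) (cross (Q 1 2) (Q 2 1))) = 0.
Proof.
move=> a0 b0 c0 uv0 HQ; pose B j := conic_point a b c (u j) (v j).
have meet (i j k : 'I_3) : i != j -> j != k -> i != k ->
    exists t, Q i j = t *: cross (cross 'e_i (B k)) (cross (B j) 'e_k).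
  move=> ij jk ik; have [] := HQ i j k ij jk ik; rewrite /collinear !det_rows3 => l1 l2.
  exact: orthogonal2_cross l1 l2 (conic_points_lines_meet a0 b0 c0 uv0 ij jk ik).
have [t01 ->] := meet 0 1 2 isT isT isT; have [t10 ->] := meet 1 0 2 isT isT isT.
have [t02 ->] := meet 0 2 1 isT isT isT; have [t20 ->] := meet 2 0 1 isT isT isT.
have [t12 ->] := meet 1 2 0 isT isT isT; have [t21 ->] := meet 2 1 0 isT isT isT.
rewrite det_rows3 /B /conic_point !delta3E /= !(cross_vec3, scale_vec3) dot_vec3.
ring.
Qed.

Lemma frame_conic_point (a b c x y z : R) : a * y * z + b * x * z + c * x * y = 0 ->
  conic_point a b c (a * y * z) (b * x * z) = - (a * b * c * x * y * z) *: vec3 x y z.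
Proof.
move=> e; have uv : a * y * z + b * x * z = - (c * x * y).
  by apply/eqP; rewrite -subr_eq0 opprK e.
by rewrite /conic_point uv scale_vec3; congr vec3; ring.
Qed.

Lemma hexagon_frame (a b c : R) (B : 'I_3 -> 'rV[R]_3) (Q : 'I_3 -> 'I_3 -> 'rV[R]_3) :
  a != 0 -> b != 0 -> c != 0 ->
  (forall j x y z, B j = vec3 x y z ->
     [/\ x != 0, y != 0, z != 0 & a * y * z + b * x * z + c * x * y = 0]) ->
  (forall i j k : 'I_3, i != j -> j != k -> i != k ->
     collinear 'e_i (B k) (Q i j) /\ collinear (B j) 'e_k (Q i j)) ->
  \det (rows3 (cross (Q 0 1) (Q 1 0)) (cross (Q 0 2) (Q 2 0)) (cross (Q 1 2) (Q 2 1))) = 0.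
Proof.
move=> a0 b0 c0 onB HQ.
pose u j := a * B j 0 1 * B j 0 2; pose v j := b * B j 0 0 * B j 0 2.
have param j : [/\ u j != 0, v j != 0, u j + v j != 0 &
    exists s, conic_point a b c (u j) (v j) = s *: B j].
  case: (vec3P (B j)) (onB j) => x y z Bj /(_ x y z Bj) [x0 y0 z0 e].
  rewrite /u /v Bj !mxE /=; split; rewrite ?mulf_neq0 //.
    suff -> : a * y * z + b * x * z = - (c * x * y) by rewrite oppr_eq0 !mulf_neq0.
    by apply/eqP; rewrite -subr_eq0 opprK e.
  by eexists; apply: frame_conic_point.
apply: (hexagon_conic_points (u := u) (v := v) a0 b0 c0).
  by move=> j; case: (param j).
move=> i j k ij jk ik; have [l1 l2] := HQ i j k ij jk ik.
have [_ _ _ [s ->]] := param k; have [_ _ _ [s' ->]] := param j.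
split; [rewrite -(scale1r 'e_i) | rewrite -(scale1r 'e_k)];
  rewrite -(scale1r (Q i j)); exact: collinear_scale.
Qed.

End Projective.

Theorem theorem2 (R : realType) (M : 'M[R]_3) (A B : 'I_3 -> 'rV[R]_3)
    (Q : 'I_3 -> 'I_3 -> 'rV[R]_3) :
  nondeg_conic M ->
  (forall i, ppoint (A i) /\ on_conic M (A i)) ->
  (forall i, ppoint (B i) /\ on_conic M (B i)) ->
  (* the six vertices of the hexagon are pairwise distinct *)
  (forall i j, i != j -> ~ proj_eq (A i) (A j)) ->
  (forall i j, i != j -> ~ proj_eq (B i) (B j)) ->
  (forall i j, ~ proj_eq (A i) (B j)) ->
  (* Q_ij is the intersection point of lines A_i B_k and B_j A_k *)
  (forall i j k, i != j -> j != k -> i != k ->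
     ppoint (Q i j) /\ collinear (A i) (B k) (Q i j) /\ collinear (B j) (A k) (Q i j)) ->
  (* general position: the lines Q_ij Q_ji are well defined *)
  (forall i j, i != j -> ~ proj_eq (Q i j) (Q j i)) ->
  exists P : 'rV[R]_3, ppoint P /\
    (forall i j, i != j -> collinear (Q i j) (Q j i) P).
Proof.
move=> conicM onA onB AA _ AB HQ _; have [M_sym _] := conicM.
have A_conic i : on_conic M (A i) by case: (onA i).
have A_form i j : i != j -> form M (A i) (A j) != 0.
  move=> ij; apply: conic_form_neq0 => //.
  by apply: cross_neq0 (AA i j ij); [case: (onA i) | case: (onA j)].
have T_unit : rows3 (A 0) (A 1) (A 2) \in unitmx.
  by apply: (conic_rows3_unit M_sym) => //; apply: A_form.
pose B' j := frame_coords A (B j); pose Q' i j := frame_coords A (Q i j).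
case: (concurrent_of_det (Q := Q')) => [|P P0 onP].
  apply: (hexagon_frame (B := B') (A_form 1 2 isT) (A_form 0 2 isT) (A_form 0 1 isT)).
    move=> j x y z; apply: frame_coords_conic => //; first by case: (onB j).
    by move=> i; apply: cross_neq0 (AB i j); [case: (onA i) | case: (onB j)].
  move=> i j k ij jk ik; have [_ [l1 l2]] := HQ i j k ij jk ik.
  by rewrite -(frame_coords_vertex T_unit i) -(frame_coords_vertex T_unit k)
    !collinear_frame_coords.
exists (P *m rows3 (A 0) (A 1) (A 2)); split.
  by apply: contraNneq P0 => P0; rewrite -(frame_coordsKV T_unit P) P0 /frame_coords mul0mx.
by move=> i j ij; rewrite -(collinear_frame_coords T_unit) frame_coordsKV //; apply: onP.
Qed.
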